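(* (a) If $\xi_1(\beta)\le C<\frac{\beta u_0}{r}$, then the function $$f_C(z)=\frac{\beta u_0}{r}-\frac{\frac{\beta u_0}{r}-C}{e^{\alpha_1d}+\frac{\alpha_1}{\alpha_2}e^{-\alpha_2d}}\Big(e^{\alpha_1z}+\frac{\alpha_1}{\alpha_2}e^{-\alpha_2z}\Big),\quad z\in[0,d],$$ solves Problem 1 with $f_C'(0)=0$ and $f_C(d)=C$. (b) If $\frac{\beta u_0-1}{r}<C\le\xi_2(\beta)$, then the function $$g_C(z)=\frac{\beta u_0-1}{r}+\Big(C-\frac{\beta u_0-1}{r}\Big)e^{-\alpha_2(z-d)},\quad z\in[d,\infty),$$ solves Problem 2 with $g_C(d)=C$ and $g_C$ bounded.
   Context: Fix $\mu\in\mathbb R$, $\sigma>0$, $u_0>0$, $r>0$, $\beta>0$, $d>0$. For $u\in[0,u_0]$ let $\theta_1(u)=\frac{\sqrt{(\mu-u)^2+2r\sigma^2}+(\mu-u)}{\sigma^2}$, $\theta_2(u)=\frac{\sqrt{(\mu-u)^2+2r\sigma^2}-(\mu-u)}{\sigma^2}$; $\alpha_1=\theta_1(u_0)$, $\alpha_2=\theta_2(u_0)$. Let $\xi_1(\beta)=\frac{\beta u_0}{r}-\beta\frac{e^{\alpha_1d}+\frac{\alpha_1}{\alpha_2}e^{-\alpha_2d}}{\alpha_1(e^{\alpha_1d}-e^{-\alpha_2d})}$ and $\xi_2(\beta)=\frac{\beta u_0-1}{r}+\frac{\beta}{\alpha_2}$. Problem 1: a bounded twice continuously differentiable function $f$ on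 $[0,d]$ satisfying $-rf(z)-\mu f'(z)+\frac{\sigma^2}{2}f''(z)+\sup_{u\in[0,u_0]}\{(\beta+f'(z))u\}=0$ for $z\in[0,d]$ (with one-sided derivatives at the endpoints). Problem 2: a bounded twice continuously differentiable function $g$ on $[d,\infty)$ satisfying $-rg(z)-\mu g'(z)+\frac{\sigma^2}{2}g''(z)+\sup_{u\in[0,u_0]}\{(\beta+g'(z))u\}=1$ for $z\ge d$. *)

From Stdlib Require Import Reals Lra.
From Coquelicot Require Import Coquelicot.
Open Scope R_scope.

Definition theta1 (mu sigma r u : R) : R :=
  (sqrt ((mu - u)^2 + 2 * r * sigma^2) + (mu - u)) / sigma^2.
Definition theta2 (mu sigma r u : R) : R :=
  (sqrt ((mu - u)^2 + 2 * r * sigma^2) - (mu - u)) / sigma^2.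

Definition alpha1 (mu sigma u0 r : R) : R := theta1 mu sigma r u0.
Definition alpha2 (mu sigma u0 r : R) : R := theta2 mu sigma r u0.

Definition xi1 (mu sigma u0 r beta d : R) : R :=
  let a1 := alpha1 mu sigma u0 r in let a2 := alpha2 mu sigma u0 r in
  beta * u0 / r
  - beta * (exp (a1 * d) + a1 / a2 * exp (- a2 * d))
      / (a1 * (exp (a1 * d) - exp (- a2 * d))).

Definition xi2 (mu sigma u0 r beta : R) : R :=
  (beta * u0 - 1) / r + beta / alpha2 mu sigma u0 r.

(* Derivative of f at z relative to the set D (one-sided at endpoints of an
   interval D). *)
Definition has_deriv_within (D : R -> Prop) (f : R -> R) (z l : R) : Prop :=
  forall eps : R, 0 < eps -> exists delta : R, 0 < delta /\
    forall y : R, D y -> y <> z -> Rabs (y - z) < delta ->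
      Rabs ((f y - f z) / (y - z) - l) < eps.

Definition continuous_within (D : R -> Prop) (f : R -> R) (z : R) : Prop :=
  forall eps : R, 0 < eps -> exists delta : R, 0 < delta /\
    forall y : R, D y -> Rabs (y - z) < delta -> Rabs (f y - f z) < eps.

Definition bounded_on (D : R -> Prop) (f : R -> R) : Prop :=
  exists M : R, forall z : R, D z -> Rabs (f z) <= M.

Definition C2_on (D : R -> Prop) (f f1 f2 : R -> R) : Prop :=
  forall z : R, D z ->
    has_deriv_within D f z (f1 z) /\ has_deriv_within D f1 z (f2 z) /\
    continuous_within D f2 z.

Definition sup_ctrl (u0 p : R) : R :=
  real (Lub_Rbar (fun y => exists u : R, 0 <= u <= u0 /\ y = p * u)).

Definition solves_HJB (mu sigma u0 r beta rhs : R) (D : R -> Prop)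
    (f f1 f2 : R -> R) : Prop :=
  bounded_on D f /\ C2_on D f f1 f2 /\
  forall z : R, D z ->
    - r * f z - mu * f1 z + sigma^2 / 2 * f2 z + sup_ctrl u0 (beta + f1 z) = rhs.

Definition Dom1 (d : R) : R -> Prop := fun z => 0 <= z <= d.
Definition Dom2 (d : R) : R -> Prop := fun z => d <= z.

Definition Problem1 mu sigma u0 r beta d (f f1 f2 : R -> R) : Prop :=
  solves_HJB mu sigma u0 r beta 0 (Dom1 d) f f1 f2.
Definition Problem2 mu sigma u0 r beta d (g g1 g2 : R -> R) : Prop :=
  solves_HJB mu sigma u0 r beta 1 (Dom2 d) g g1 g2.

Definition fC (mu sigma u0 r beta d C : R) (z : R) : R :=
  let a1 := alpha1 mu sigma u0 r in let a2 := alpha2 mu sigma u0 r in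
  beta * u0 / r
  - (beta * u0 / r - C) / (exp (a1 * d) + a1 / a2 * exp (- a2 * d))
    * (exp (a1 * z) + a1 / a2 * exp (- a2 * z)).

Definition gC (mu sigma u0 r beta d C : R) (z : R) : R :=
  let a2 := alpha2 mu sigma u0 r in
  (beta * u0 - 1) / r + (C - (beta * u0 - 1) / r) * exp (- a2 * (z - d)).

From Stdlib Require Import Reals Lra.
From Coquelicot Require Import Coquelicot.
Open Scope R_scope.

(* Where beta + f' >= 0 the supremum in the HJB equation is attained at u = u0,
   so the equation becomes the linear ODE
     sigma^2/2 f'' - (mu - u0) f' - r f = rhs - beta u0,
   whose characteristic roots are alpha1 and -alpha2.  Both f_C and g_C are a
   constant particular solution plus a combination of e^(alpha1 z) and
   e^(-alpha2 z); g_C carries no growing mode, hence is bounded on [d, oo).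
   It remains to check beta + f' >= 0: f_C' is decreasing on [0, d] and g_C' is
   negative and increasing on [d, oo), so the worst case is z = d, where the
   condition is exactly xi1 <= C, respectively C <= xi2. *)

Lemma exp_le_exp_compat (x y : R) : x <= y -> exp x <= exp y.
Proof.
  intros [Hlt | ->]; [now left; apply exp_increasing | apply Rle_refl].
Qed.

Lemma sup_ctrl_nonneg (u0 p : R) : 0 <= u0 -> 0 <= p -> sup_ctrl u0 p = p * u0.
Proof.
  intros Hu0 Hp. unfold sup_ctrl.
  rewrite (is_lub_Rbar_unique _ (p * u0)); [reflexivity |].
  split.
  - intros y [u [Hu ->]]. simpl. apply Rmult_le_compat_l; lra.
  - intros b Hb. apply Hb. exists u0. split; [lra | ring].
Qed.

Lemma is_derive_has_deriv_within (D : R -> Prop) (f : R -> R) (z l : R) :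
  is_derive f z l -> has_deriv_within D f z l.
Proof.
  intros Hf%is_derive_Reals eps Heps.
  destruct (Hf eps Heps) as [delta Hdelta].
  exists delta. split; [apply cond_pos |].
  intros y _ Hyz Hy.
  replace y with (z + (y - z)) at 1 by ring.
  apply Hdelta; [lra | exact Hy].
Qed.

Lemma continuous_continuous_within (D : R -> Prop) (f : R -> R) (z : R) :
  continuous f z -> continuous_within D f z.
Proof.
  intros Hf%continuity_pt_filterlim eps Heps.
  destruct (Hf eps Heps) as [delta [Hdelta Hf']].
  exists delta. split; [exact Hdelta |].
  intros y _ Hy.
  destruct (Req_dec y z) as [-> | Hyz].
  - rewrite Rminus_diag, Rabs_R0. exact Heps.
  - apply (Hf' y). split; [split; [exact I | congruence] | exact Hy].
Qed.

Lemma bounded_on_Dom1_continuous (d : R) (f : R -> R) :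
  0 <= d -> (forall z, continuous f z) -> bounded_on (Dom1 d) f.
Proof.
  intros Hd Hf.
  destruct (continuity_ab_maj (fun z => Rabs (f z)) 0 d Hd) as [zmax [Hmax _]].
  - intros z _. apply continuity_pt_filterlim.
    apply (continuous_comp f Rabs); [apply Hf | apply continuous_Rabs].
  - exists (Rabs (f zmax)). exact Hmax.
Qed.

Lemma bounded_on_Dom2_decay (d K c l : R) :
  0 <= l -> bounded_on (Dom2 d) (fun z => K + c * exp (- l * (z - d))).
Proof.
  intros Hl. exists (Rabs K + Rabs c). intros z Hz. unfold Dom2 in Hz.
  assert (Hexp : exp (- l * (z - d)) <= 1).
  { rewrite <- exp_0. apply exp_le_exp_compat. nra. }
  pose proof (exp_pos (- l * (z - d))).
  eapply Rle_trans; [apply Rabs_triang |]. apply Rplus_le_compat_l.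
  rewrite Rabs_mult, (Rabs_pos_eq (exp _)) by lra.
  pose proof (Rabs_pos c). nra.
Qed.

Definition exp_pair (c1 l1 c2 l2 s z : R) : R :=
  c1 * exp (l1 * (z - s)) + c2 * exp (l2 * (z - s)).

Lemma is_derive_exp_pair (c1 l1 c2 l2 s z : R) :
  is_derive (exp_pair c1 l1 c2 l2 s) z (exp_pair (c1 * l1) l1 (c2 * l2) l2 s z).
Proof. unfold exp_pair. auto_derive; [easy | unfold Rminus; ring]. Qed.

Lemma is_derive_affine_exp_pair (f : R -> R) (K c1 l1 c2 l2 s z : R) :
  (forall t, f t = K + exp_pair c1 l1 c2 l2 s t) ->
  is_derive f z (exp_pair (c1 * l1) l1 (c2 * l2) l2 s z).
Proof.
  intros Hf. apply (is_derive_ext (fun t => K + exp_pair c1 l1 c2 l2 s t)).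
  - intros t. now rewrite Hf.
  - unfold exp_pair. auto_derive; [easy | unfold Rminus; ring].
Qed.

Lemma C2_on_affine_exp_pair (D : R -> Prop) (f : R -> R) (K c1 l1 c2 l2 s : R) :
  (forall t, f t = K + exp_pair c1 l1 c2 l2 s t) ->
  C2_on D f (exp_pair (c1 * l1) l1 (c2 * l2) l2 s)
    (exp_pair (c1 * l1 * l1) l1 (c2 * l2 * l2) l2 s).
Proof.
  intros Hf z _. split; [| split].
  - apply is_derive_has_deriv_within. now apply (is_derive_affine_exp_pair f K).
  - apply is_derive_has_deriv_within, is_derive_exp_pair.
  - apply continuous_continuous_within, (ex_derive_continuous (V := R_NormedModule)).
    eexists. apply is_derive_exp_pair.
Qed.

Section Characteristic.

Variables mu sigma r : R.
Hypotheses (Hsigma : 0 < sigma) (Hr : 0 < r).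

Definition char_poly (u x : R) : R := sigma ^ 2 / 2 * x ^ 2 - (mu - u) * x - r.

Lemma discriminant_sqrt (u : R) :
  let S := sqrt ((mu - u) ^ 2 + 2 * r * sigma ^ 2) in
  S * S = (mu - u) ^ 2 + 2 * r * sigma ^ 2 /\ Rabs (mu - u) < S.
Proof.
  intros S.
  assert (Hpos : 0 < 2 * r * sigma ^ 2)
    by (apply Rmult_lt_0_compat; [lra | apply pow_lt; lra]).
  split.
  - apply sqrt_sqrt. pose proof (pow2_ge_0 (mu - u)). lra.
  - rewrite <- sqrt_Rsqr_abs. apply sqrt_lt_1_alt. unfold Rsqr.
    split; [apply Rle_0_sqr | simpl; lra].
Qed.

Lemma theta1_pos (u : R) : 0 < theta1 mu sigma r u.
Proof.
  destruct (discriminant_sqrt u) as [_ HS].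
  pose proof (Rle_abs (- (mu - u))) as Habs. rewrite Rabs_Ropp in Habs.
  unfold theta1.
  apply Rdiv_lt_0_compat; [lra | apply pow_lt; lra].
Qed.

Lemma theta2_pos (u : R) : 0 < theta2 mu sigma r u.
Proof.
  destruct (discriminant_sqrt u) as [_ HS].
  pose proof (Rle_abs (mu - u)) as Habs.
  unfold theta2. apply Rdiv_lt_0_compat; [lra | apply pow_lt; lra].
Qed.

Lemma char_poly_theta1 (u : R) : char_poly u (theta1 mu sigma r u) = 0.
Proof.
  destruct (discriminant_sqrt u) as [HS _].
  unfold char_poly, theta1.
  set (S := sqrt _) in *.
  transitivity ((S * S - (mu - u) ^ 2 - 2 * r * sigma ^ 2) / (2 * sigma ^ 2)).
  - field. lra.
  - rewrite HS. field. lra.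
Qed.

Lemma char_poly_theta2 (u : R) : char_poly u (- theta2 mu sigma r u) = 0.
Proof.
  destruct (discriminant_sqrt u) as [HS _].
  unfold char_poly, theta2.
  set (S := sqrt _) in *.
  transitivity ((S * S - (mu - u) ^ 2 - 2 * r * sigma ^ 2) / (2 * sigma ^ 2)).
  - field. lra.
  - rewrite HS. field. lra.
Qed.

Lemma exp_pair_char_ode (u K c1 l1 c2 l2 s z : R) :
  char_poly u l1 = 0 -> char_poly u l2 = 0 ->
  sigma ^ 2 / 2 * exp_pair (c1 * l1 * l1) l1 (c2 * l2 * l2) l2 s z
  - (mu - u) * exp_pair (c1 * l1) l1 (c2 * l2) l2 s z
  - r * (K + exp_pair c1 l1 c2 l2 s z) = - r * K.
Proof.
  intros H1 H2.
  transitivity (c1 * exp (l1 * (z - s)) * char_poly u l1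
                + c2 * exp (l2 * (z - s)) * char_poly u l2 - r * K).
  - unfold exp_pair, char_poly. ring.
  - rewrite H1, H2. ring.
Qed.

End Characteristic.

Section LinearRegime.

Variables (mu sigma u0 r beta rhs : R) (D : R -> Prop).
Hypothesis Hu0 : 0 <= u0.

Lemma solves_HJB_linear_regime (f f1 f2 : R -> R) :
  bounded_on D f -> C2_on D f f1 f2 ->
  (forall z, D z -> 0 <= beta + f1 z) ->
  (forall z, D z ->
     sigma ^ 2 / 2 * f2 z - (mu - u0) * f1 z - r * f z = rhs - beta * u0) ->
  solves_HJB mu sigma u0 r beta rhs D f f1 f2.
Proof.
  intros Hbnd HC2 Hctrl Hode. split; [exact Hbnd | split; [exact HC2 |]].
  intros z Dz. rewrite sup_ctrl_nonneg by auto.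
  specialize (Hode z Dz). lra.
Qed.

Lemma solves_HJB_exp_pair (f : R -> R) (K c1 l1 c2 l2 s : R) :
  char_poly mu sigma r u0 l1 = 0 -> char_poly mu sigma r u0 l2 = 0 ->
  (forall t, f t = K + exp_pair c1 l1 c2 l2 s t) ->
  bounded_on D f ->
  (forall z, D z -> 0 <= beta + exp_pair (c1 * l1) l1 (c2 * l2) l2 s z) ->
  beta * u0 - r * K = rhs ->
  solves_HJB mu sigma u0 r beta rhs D f (exp_pair (c1 * l1) l1 (c2 * l2) l2 s)
    (exp_pair (c1 * l1 * l1) l1 (c2 * l2 * l2) l2 s).
Proof.
  intros H1 H2 Hf Hbnd Hctrl Hrhs.
  apply solves_HJB_linear_regime;
    [exact Hbnd | now apply C2_on_affine_exp_pair with K | exact Hctrl |].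
  intros z _. rewrite Hf, exp_pair_char_ode by assumption. lra.
Qed.

End LinearRegime.

Lemma exp_gap_le (l1 l2 z d : R) :
  0 <= l1 -> 0 <= l2 -> z <= d ->
  exp (l1 * z) - exp (- l2 * z) <= exp (l1 * d) - exp (- l2 * d).
Proof.
  intros H1 H2 Hzd.
  assert (exp (l1 * z) <= exp (l1 * d)) by (apply exp_le_exp_compat; nra).
  assert (exp (- l2 * d) <= exp (- l2 * z)) by (apply exp_le_exp_compat; nra).
  lra.
Qed.

Section Solutions.

Variables mu sigma u0 r beta d : R.
Hypotheses (Hsigma : 0 < sigma) (Hu0 : 0 < u0) (Hr : 0 < r) (Hd : 0 < d).

Local Notation a1 := (alpha1 mu sigma u0 r).
Local Notation a2 := (alpha2 mu sigma u0 r).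

Let Ha1 : 0 < a1 := theta1_pos mu sigma r Hsigma Hr u0.
Let Ha2 : 0 < a2 := theta2_pos mu sigma r Hsigma Hr u0.

Definition fC_amp (C : R) : R :=
  (beta * u0 / r - C) / (exp (a1 * d) + a1 / a2 * exp (- a2 * d)).

Definition fC1 (C : R) : R -> R :=
  exp_pair (- fC_amp C * a1) a1 (- fC_amp C * (a1 / a2) * - a2) (- a2) 0.
Definition fC2 (C : R) : R -> R :=
  exp_pair (- fC_amp C * a1 * a1) a1 (- fC_amp C * (a1 / a2) * - a2 * - a2) (- a2) 0.

Lemma fC_exp_pair (C z : R) :
  fC mu sigma u0 r beta d C z
  = beta * u0 / r + exp_pair (- fC_amp C) a1 (- fC_amp C * (a1 / a2)) (- a2) 0 z.
Proof. unfold fC, fC_amp, exp_pair. rewrite !Rminus_0_r. ring. Qed.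

Lemma fC_denom_pos : 0 < exp (a1 * d) + a1 / a2 * exp (- a2 * d).
Proof.
  pose proof (exp_pos (a1 * d)). pose proof (exp_pos (- a2 * d)).
  assert (0 < a1 / a2) by (apply Rdiv_lt_0_compat; assumption).
  nra.
Qed.

Lemma fC1_eq (C z : R) :
  fC1 C z = - (fC_amp C * a1) * (exp (a1 * z) - exp (- a2 * z)).
Proof. unfold fC1, exp_pair. rewrite !Rminus_0_r. field. lra. Qed.

Lemma fC_amp_le_of_xi1_le (C : R) :
  xi1 mu sigma u0 r beta d <= C ->
  fC_amp C * a1 * (exp (a1 * d) - exp (- a2 * d)) <= beta.
Proof.
  unfold xi1, fC_amp. fold a1 a2.
  set (E := exp (a1 * d) + a1 / a2 * exp (- a2 * d)).
  set (q := a1 * (exp (a1 * d) - exp (- a2 * d))).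
  pose proof fC_denom_pos as HE. fold E in HE.
  assert (Hq : 0 < q).
  { apply Rmult_lt_0_compat; [exact Ha1 |].
    assert (exp (- a2 * d) < exp (a1 * d)) by (apply exp_increasing; nra). lra. }
  intros Hxi.
  set (b := (beta * u0 / r - C) / E).
  assert (Hb : b * E = beta * u0 / r - C) by (unfold b; field; lra).
  assert (Ht : beta * E / q * q = beta * E) by (field; lra).
  replace (b * a1 * (exp (a1 * d) - exp (- a2 * d))) with (b * q) by (unfold q; ring).
  nra.
Qed.

Lemma fC_control (C z : R) :
  xi1 mu sigma u0 r beta d <= C -> C < beta * u0 / r -> Dom1 d z ->
  0 <= beta + fC1 C z.
Proof.
  intros Hxi HC [Hz0 Hzd].
  assert (Hamp : 0 < fC_amp C) by (apply Rdiv_lt_0_compat; [lra | exact fC_denom_pos]).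
  pose proof (fC_amp_le_of_xi1_le C Hxi) as Hbeta.
  pose proof (exp_gap_le a1 a2 z d (Rlt_le _ _ Ha1) (Rlt_le _ _ Ha2) Hzd) as Hgap.
  rewrite fC1_eq.
  assert (0 < fC_amp C * a1) by (apply Rmult_lt_0_compat; assumption).
  nra.
Qed.

Lemma fC_solves_Problem1 (C : R) :
  xi1 mu sigma u0 r beta d <= C -> C < beta * u0 / r ->
  Problem1 mu sigma u0 r beta d (fC mu sigma u0 r beta d C) (fC1 C) (fC2 C).
Proof.
  intros Hxi HC.
  apply solves_HJB_exp_pair with (K := beta * u0 / r).
  - lra.
  - apply char_poly_theta1; assumption.
  - apply char_poly_theta2; assumption.
  - apply fC_exp_pair.
  - apply bounded_on_Dom1_continuous; [lra |]. intros z.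
    apply (ex_derive_continuous (V := R_NormedModule)). eexists.
    apply (is_derive_affine_exp_pair _ (beta * u0 / r)), fC_exp_pair.
  - intros z Hz. now apply fC_control.
  - field. lra.
Qed.

Lemma fC1_at_0 (C : R) : fC1 C 0 = 0.
Proof. rewrite fC1_eq, !Rmult_0_r. ring. Qed.

Lemma fC_at_d (C : R) : fC mu sigma u0 r beta d C d = C.
Proof.
  pose proof fC_denom_pos as HE. unfold fC.
  set (E := exp (a1 * d) + a1 / a2 * exp (- a2 * d)) in *.
  field. lra.
Qed.

Definition gC1 (C : R) : R -> R :=
  exp_pair (0 * a1) a1 ((C - (beta * u0 - 1) / r) * - a2) (- a2) d.
Definition gC2 (C : R) : R -> R :=
  exp_pair (0 * a1 * a1) a1 ((C - (beta * u0 - 1) / r) * - a2 * - a2) (- a2) d.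

Lemma gC_exp_pair (C z : R) :
  gC mu sigma u0 r beta d C z
  = (beta * u0 - 1) / r + exp_pair 0 a1 (C - (beta * u0 - 1) / r) (- a2) d z.
Proof. unfold gC, exp_pair. ring. Qed.

Lemma gC_bounded (C : R) : bounded_on (Dom2 d) (gC mu sigma u0 r beta d C).
Proof. apply bounded_on_Dom2_decay. lra. Qed.

Lemma gC_control (C z : R) :
  (beta * u0 - 1) / r < C -> C <= xi2 mu sigma u0 r beta -> Dom2 d z ->
  0 <= beta + gC1 C z.
Proof.
  unfold xi2, gC1, exp_pair, Dom2. fold a2.
  set (c := C - (beta * u0 - 1) / r).
  intros HL Hxi Hz.
  assert (Hexp : exp (- a2 * (z - d)) <= 1).
  { rewrite <- exp_0. apply exp_le_exp_compat. nra. }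
  pose proof (exp_pos (- a2 * (z - d))).
  assert (Hc : a2 * c <= beta).
  { replace beta with (a2 * (beta / a2)) by (field; lra).
    apply Rmult_le_compat_l; unfold c; lra. }
  assert (0 < a2 * c) by (apply Rmult_lt_0_compat; unfold c; lra).
  nra.
Qed.

Lemma gC_solves_Problem2 (C : R) :
  (beta * u0 - 1) / r < C -> C <= xi2 mu sigma u0 r beta ->
  Problem2 mu sigma u0 r beta d (gC mu sigma u0 r beta d C) (gC1 C) (gC2 C).
Proof.
  intros HL Hxi.
  apply solves_HJB_exp_pair with (K := (beta * u0 - 1) / r).
  - lra.
  - apply char_poly_theta1; assumption.
  - apply char_poly_theta2; assumption.
  - apply gC_exp_pair.
  - apply gC_bounded.
  - intros z Hz. now apply gC_control.
  - field. lra.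
Qed.

Lemma gC_at_d (C : R) : gC mu sigma u0 r beta d C d = C.
Proof. unfold gC. rewrite Rminus_diag, Rmult_0_r, exp_0. ring. Qed.

End Solutions.

Theorem proposition4p2 (mu sigma u0 r beta d : R)
  (Hsigma : 0 < sigma) (Hu0 : 0 < u0) (Hr : 0 < r) (Hbeta : 0 < beta) (Hd : 0 < d) :
  (forall C : R, xi1 mu sigma u0 r beta d <= C -> C < beta * u0 / r ->
     exists f1 f2 : R -> R,
       Problem1 mu sigma u0 r beta d (fC mu sigma u0 r beta d C) f1 f2 /\
       f1 0 = 0 /\ fC mu sigma u0 r beta d C d = C) /\
  (forall C : R, (beta * u0 - 1) / r < C -> C <= xi2 mu sigma u0 r beta ->
     exists g1 g2 : R -> R,
       Problem2 mu sigma u0 r beta d (gC mu sigma u0 r beta d C) g1 g2 /\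
       gC mu sigma u0 r beta d C d = C /\
       bounded_on (Dom2 d) (gC mu sigma u0 r beta d C)).
Proof.
  split; intros C HC1 HC2.
  - exists (fC1 mu sigma u0 r beta d C), (fC2 mu sigma u0 r beta d C).
    split; [| split];
      [apply fC_solves_Problem1 | apply fC1_at_0 | apply fC_at_d]; assumption.
  - exists (gC1 mu sigma u0 r beta d C), (gC2 mu sigma u0 r beta d C).
    split; [| split];
      [apply gC_solves_Problem2 | apply gC_at_d | apply gC_bounded]; assumption.
Qed.
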